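(* Assume $\mathcal M_1=\mathcal M_2=1$ and take $A_1=2\chi_{13}^2+\tfrac12(\chi_{12}-\chi_{13}-\chi_{23})^2$, $A_2=2\chi_{23}^2+\tfrac12(\chi_{12}-\chi_{13}-\chi_{23})^2$. Let $n\ge1$ and let $(\phi_1^k,\phi_2^k)\in\vec{\mathcal C}^{\mathcal G}_{\rm per}$, $k=n-1,n,n+1$, with $\overline{\phi_i^{n-1}}=\overline{\phi_i^{n}}=\overline{\phi_i^{n+1}}$ ($i=1,2$), where $(\phi_1^{n+1},\phi_2^{n+1})$ solves the BDF2 scheme at step $n+1$. Define, for $m\ge0$, $F_h^{m+1}=G_h(\phi_1^{m+1},\phi_2^{m+1})+\frac{3}{4\Delta t}\big(\|\phi_1^{m+1}-\phi_1^m\|_{-1,h}^2+\|\phi_2^{m+1}-\phi_2^m\|_{-1,h}^2\big)+\chi_{13}\|\phi_1^{m+1}-\phi_1^m\|_2^2+\chi_{23}\|\phi_2^{m+1}-\phi_2^m\|_2^2.$ Then $F_h^{n+1}\le F_h^{n}$.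
   Context: Discrete setting. Fix $L>0$, $N\in\mathbb N$, $h=L/N$, $\Omega=(0,L)^2$. $\mathcal C_{\rm per}$ is the space of real grid functions $\nu=(\nu_{i,j})_{i,j\in\mathbb Z}$ with $\nu_{i+aN,j+bN}=\nu_{i,j}$ for all integers $i,j,a,b$ ($\nu_{i,j}$ is the value at the cell centre $((i-\tfrac12)h,(j-\tfrac12)h)$); periodic face-centred functions are indexed by $(i+\frac12,j)$ (east-west faces) or $(i,j+\frac12)$ (north-south faces). Define $(A_x\nu)_{i+\frac12,j}=\tfrac12(\nu_{i+1,j}+\nu_{i,j})$, $(D_x\nu)_{i+\frac12,j}=\tfrac1h(\nu_{i+1,j}-\nu_{i,j})$, and for east-west face functions $f$, $(a_xf)_{i,j}=\tfrac12(f_{i+\frac12,j}+f_{i-\frac12,j})$, $(d_xf)_{i,j}=\tfrac1h(f_{i+\frac12,j}-f_{i-\frac12,j})$; $A_y,D_y,a_y,d_y$ are defined analogously in the second index. $\nabla_h\nu=(D_x\nu,D_y\nu)$, $\nabla_h\cdot(f^x,f^y)=d_xf^x+d_yf^y$, $\Delta_h\nu=d_x(D_x\nu)+d_y(D_y\nu)$ (the 5-point Laplacian). For $\nu,\xi\in\mathcal C_{\rm per}$: $\langle\nu,\xi\rangle=h^2\sum_{i,j=1}^N\nu_{i,j}\xi_{i,j}$, $\|\nu\|_2=\langle\nu,\nu\rangle^{1/2}$, $\|\nu\|_\infty=\max_{1\le i,j\le N}|\nu_{i,j}|$, $\|\nabla_h\nu\|_2^2=\langle a_x((D_x\nu)^2)+a_y((D_y\nu)^2),1\rangle$,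 $\overline{\nu}=|\Omega|^{-1}\langle\nu,1\rangle$. For $\overline\nu=0$, $(-\Delta_h)^{-1}\nu$ denotes the unique mean-zero $\psi\in\mathcal C_{\rm per}$ with $-\Delta_h\psi=\nu$; for mean-zero $\nu,\xi$, $\langle\nu,\xi\rangle_{-1,h}=\langle\nu,(-\Delta_h)^{-1}\xi\rangle$ and $\|\nu\|_{-1,h}=\langle\nu,\nu\rangle_{-1,h}^{1/2}$. Functions of grid functions (products, quotients, $\ln$) act pointwise. Model. $M_0,N_0>0$, $\alpha=\pi((M_0/\pi)^{1/2}+N_0/2)^2$, $\beta=2(M_0/\pi)^{1/2}+N_0$; $\varepsilon_1,\varepsilon_2,\varepsilon_3>0$; $\chi_{12},\chi_{13},\chi_{23}>0$ with $4\chi_{13}\chi_{23}-(\chi_{12}-\chi_{13}-\chi_{23})^2>0$; mobilities $\mathcal M_1,\mathcal M_2>0$. For $a,b>0$, $a+b<1$: $S(a,b)=\frac{a}{M_0}\ln\frac{\alpha a}{M_0}+\frac{b}{N_0}\ln\frac{\beta b}{N_0}+(1-a-b)\ln(1-a-b)$, $H(a,b)=\chi_{12}ab+\chi_{13}a(1-a-b)+\chi_{23}b(1-a-b)$; thus $\partial_aS=\frac1{M_0}\ln\frac{\alpha a}{M_0}+\frac1{M_0}-\ln(1-a-b)-1$, $\partial_bS=\frac1{N_0}\ln\frac{\beta b}{N_0}+\frac1{N_0}-\ln(1-a-b)-1$, $\partial_aH=\chi_{13}-2\chi_{13}a+(\chi_{12}-\chi_{13}-\chi_{23})b$, $\partial_bH=\chi_{23}-2\chi_{23}b+(\chi_{12}-\chi_{13}-\chi_{23})a$.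 $\kappa(s)=1/(36s)$. The Gibbs triangle is $\mathcal G=\{(a,b):a>0,b>0,a+b<1\}$, and $\vec{\mathcal C}^{\mathcal G}_{\rm per}$ is the set of pairs $(\phi_1,\phi_2)\in\mathcal C_{\rm per}^2$ with $((\phi_1)_{i,j},(\phi_2)_{i,j})\in\mathcal G$ for all $i,j$. For such a pair set $u_1=\phi_1$, $u_2=\phi_2$, $u_3=1-\phi_1-\phi_2$ and, for $k=1,2,3$, $T_k(\phi_1,\phi_2)=a_x(\kappa'(A_xu_k)(D_xu_k)^2)-2d_x(\kappa(A_xu_k)D_xu_k)+a_y(\kappa'(A_yu_k)(D_yu_k)^2)-2d_y(\kappa(A_yu_k)D_yu_k)$. Discrete energy: $G_h(\phi_1,\phi_2)=\langle S(\phi_1,\phi_2)+H(\phi_1,\phi_2),1\rangle+\sum_{k=1}^3\varepsilon_k^2\langle a_x(\kappa(A_xu_k)(D_xu_k)^2)+a_y(\kappa(A_yu_k)(D_yu_k)^2),1\rangle$. Convex-part derivatives: $\delta_{\phi_1}G_{h,c}(\phi_1,\phi_2)=\partial_aS(\phi_1,\phi_2)+\varepsilon_1^2T_1-\varepsilon_3^2T_3$, $\delta_{\phi_2}G_{h,c}(\phi_1,\phi_2)=\partial_bS(\phi_1,\phi_2)+\varepsilon_2^2T_2-\varepsilon_3^2T_3$. BDF2 scheme. Fix $\Delta t>0$ and constants $A_1,A_2\ge0$. For $n\ge1$, given $(\phi_1^{k},\phi_2^{k})$, $k=n-1,n$, set $\hat\phi_i^n=2\phi_i^n-\phi_i^{n-1}$.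 A pair $(\phi_1^{n+1},\phi_2^{n+1})\in\vec{\mathcal C}^{\mathcal G}_{\rm per}$ solves the scheme at step $n+1$ if for $i=1,2$: $\frac{3\phi_i^{n+1}-4\phi_i^n+\phi_i^{n-1}}{2\Delta t}=\mathcal M_i\Delta_h\mu_i^{n+1}$, where $\mu_1^{n+1}=\delta_{\phi_1}G_{h,c}(\phi_1^{n+1},\phi_2^{n+1})+\partial_aH(\hat\phi_1^n,\hat\phi_2^n)-A_1\Delta t\,\Delta_h(\phi_1^{n+1}-\phi_1^n)$ and $\mu_2^{n+1}=\delta_{\phi_2}G_{h,c}(\phi_1^{n+1},\phi_2^{n+1})+\partial_bH(\hat\phi_1^n,\hat\phi_2^n)-A_2\Delta t\,\Delta_h(\phi_2^{n+1}-\phi_2^n)$. *)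

From Stdlib Require Import Reals ZArith List ClassicalEpsilon.
Open Scope R_scope.

(* Cell-centred: f i j is the value at cell
   (i,j).  East-west face functions: g i j is the value at face (i+1/2, j).
   North-south face functions: g i j is the value at face (i, j+1/2). *)
Definition grid := Z -> Z -> R.

Definition periodic (N : nat) (f : grid) : Prop :=
  forall i j a b : Z,
    f (i + a * Z.of_nat N)%Z (j + b * Z.of_nat N)%Z = f i j.

Definition gplus (f g : grid) : grid := fun i j => f i j + g i j.
Definition gminus (f g : grid) : grid := fun i j => f i j - g i j.
Definition gconst (c : R) : grid := fun _ _ => c.

Definition Ax (f : grid) : grid := fun i j => (f (i + 1)%Z j + f i j) / 2.
Definition Ay (f : grid) : grid := fun i j => (f i (j + 1)%Z + f i j) / 2.
Definition Dx (h : R) (f : grid) : grid := fun i j => (f (i + 1)%Z j - f i j) / h.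
Definition Dy (h : R) (f : grid) : grid := fun i j => (f i (j + 1)%Z - f i j) / h.
(* on face functions: faces i+1/2 -> g i, i-1/2 -> g (i-1) *)
Definition ax (g : grid) : grid := fun i j => (g i j + g (i - 1)%Z j) / 2.
Definition ay (g : grid) : grid := fun i j => (g i j + g i (j - 1)%Z) / 2.
Definition dx (h : R) (g : grid) : grid := fun i j => (g i j - g (i - 1)%Z j) / h.
Definition dy (h : R) (g : grid) : grid := fun i j => (g i j - g i (j - 1)%Z) / h.

Definition lap (h : R) (f : grid) : grid :=
  fun i j => dx h (Dx h f) i j + dy h (Dy h f) i j.

Definition sum1N (N : nat) (F : Z -> R) : R :=
  fold_right Rplus 0 (map (fun k => F (Z.of_nat k + 1)%Z) (seq 0 N)).

Definition inner (h : R) (N : nat) (f g : grid) : R :=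
  h ^ 2 * sum1N N (fun i => sum1N N (fun j => f i j * g i j)).

Definition mean (L : R) (N : nat) (f : grid) : R :=
  inner (L / INR N) N f (gconst 1) / (L ^ 2).

(* (-Delta_h)^{-1} nu: the (unique, for mean-zero nu) periodic mean-zero psi
   with -Delta_h psi = nu; chosen by Hilbert's epsilon. *)
Definition inv_neg_lap (L : R) (N : nat) (nu : grid) : grid :=
  epsilon (inhabits (gconst 0))
    (fun psi => periodic N psi /\ mean L N psi = 0 /\
                forall i j, - lap (L / INR N) psi i j = nu i j).

Definition neg1_sq (L : R) (N : nat) (nu : grid) : R :=
  inner (L / INR N) N nu (inv_neg_lap L N nu).

Definition l2_sq (L : R) (N : nat) (nu : grid) : R :=
  inner (L / INR N) N nu nu.

Definition alpha (M0 N0 : R) : R := PI * (sqrt (M0 / PI) + N0 / 2) ^ 2.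
Definition beta (M0 N0 : R) : R := 2 * sqrt (M0 / PI) + N0.

Definition S (M0 N0 a b : R) : R :=
  a / M0 * ln (alpha M0 N0 * a / M0) + b / N0 * ln (beta M0 N0 * b / N0)
  + (1 - a - b) * ln (1 - a - b).
Definition Hf (c12 c13 c23 a b : R) : R :=
  c12 * a * b + c13 * a * (1 - a - b) + c23 * b * (1 - a - b).

Definition dS_a (M0 N0 a b : R) : R :=
  1 / M0 * ln (alpha M0 N0 * a / M0) + 1 / M0 - ln (1 - a - b) - 1.
Definition dS_b (M0 N0 a b : R) : R :=
  1 / N0 * ln (beta M0 N0 * b / N0) + 1 / N0 - ln (1 - a - b) - 1.
Definition dH_a (c12 c13 c23 a b : R) : R :=
  c13 - 2 * c13 * a + (c12 - c13 - c23) * b.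
Definition dH_b (c12 c13 c23 a b : R) : R :=
  c23 - 2 * c23 * b + (c12 - c13 - c23) * a.

Definition kappa (s : R) : R := 1 / (36 * s).
Definition kappa' (s : R) : R := - 1 / (36 * s ^ 2).

Definition Tk (h : R) (u : grid) : grid := fun i j =>
  ax (fun p q => kappa' (Ax u p q) * (Dx h u p q) ^ 2) i j
  - 2 * dx h (fun p q => kappa (Ax u p q) * Dx h u p q) i j
  + ay (fun p q => kappa' (Ay u p q) * (Dy h u p q) ^ 2) i j
  - 2 * dy h (fun p q => kappa (Ay u p q) * Dy h u p q) i j.

Definition u3 (p1 p2 : grid) : grid := fun i j => 1 - p1 i j - p2 i j.

Definition grad_dens (h : R) (u : grid) : grid := fun i j =>
  ax (fun p q => kappa (Ax u p q) * (Dx h u p q) ^ 2) i j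
  + ay (fun p q => kappa (Ay u p q) * (Dy h u p q) ^ 2) i j.

Definition Gh (L : R) (N : nat) (M0 N0 e1 e2 e3 c12 c13 c23 : R)
  (p1 p2 : grid) : R :=
  let h := L / INR N in
  inner h N (fun i j => S M0 N0 (p1 i j) (p2 i j) + Hf c12 c13 c23 (p1 i j) (p2 i j))
        (gconst 1)
  + e1 ^ 2 * inner h N (grad_dens h p1) (gconst 1)
  + e2 ^ 2 * inner h N (grad_dens h p2) (gconst 1)
  + e3 ^ 2 * inner h N (grad_dens h (u3 p1 p2)) (gconst 1).

Definition in_gibbs (N : nat) (p1 p2 : grid) : Prop :=
  periodic N p1 /\ periodic N p2 /\
  forall i j, 0 < p1 i j /\ 0 < p2 i j /\ p1 i j + p2 i j < 1.

Definition mu1 (L : R) (N : nat) (M0 N0 e1 e2 e3 c12 c13 c23 dt A1 : R)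
  (q1m q2m q1 q2 p1 p2 : grid) : grid :=
  let h := L / INR N in fun i j =>
  dS_a M0 N0 (p1 i j) (p2 i j) + e1 ^ 2 * Tk h p1 i j - e3 ^ 2 * Tk h (u3 p1 p2) i j
  + dH_a c12 c13 c23 (2 * q1 i j - q1m i j) (2 * q2 i j - q2m i j)
  - A1 * dt * lap h (gminus p1 q1) i j.
Definition mu2 (L : R) (N : nat) (M0 N0 e1 e2 e3 c12 c13 c23 dt A2 : R)
  (q1m q2m q1 q2 p1 p2 : grid) : grid :=
  let h := L / INR N in fun i j =>
  dS_b M0 N0 (p1 i j) (p2 i j) + e2 ^ 2 * Tk h p2 i j - e3 ^ 2 * Tk h (u3 p1 p2) i j
  + dH_b c12 c13 c23 (2 * q1 i j - q1m i j) (2 * q2 i j - q2m i j)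
  - A2 * dt * lap h (gminus p2 q2) i j.

(* (p1,p2) = phi^{n+1} solves the BDF2 scheme given (q1m,q2m) = phi^{n-1},
   (q1,q2) = phi^n *)
Definition solves_bdf2 (L : R) (N : nat) (M0 N0 e1 e2 e3 c12 c13 c23 Mob1 Mob2 dt A1 A2 : R)
  (q1m q2m q1 q2 p1 p2 : grid) : Prop :=
  in_gibbs N p1 p2 /\
  (forall i j, (3 * p1 i j - 4 * q1 i j + q1m i j) / (2 * dt)
     = Mob1 * lap (L / INR N) (mu1 L N M0 N0 e1 e2 e3 c12 c13 c23 dt A1 q1m q2m q1 q2 p1 p2) i j) /\
  (forall i j, (3 * p2 i j - 4 * q2 i j + q2m i j) / (2 * dt)
     = Mob2 * lap (L / INR N) (mu2 L N M0 N0 e1 e2 e3 c12 c13 c23 dt A2 q1m q2m q1 q2 p1 p2) i j).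

(* F_h^{m+1}, given (p1,p2) = phi^{m+1} and (q1,q2) = phi^m *)
Definition Fh (L : R) (N : nat) (M0 N0 e1 e2 e3 c12 c13 c23 dt : R)
  (q1 q2 p1 p2 : grid) : R :=
  Gh L N M0 N0 e1 e2 e3 c12 c13 c23 p1 p2
  + 3 / (4 * dt) * (neg1_sq L N (gminus p1 q1) + neg1_sq L N (gminus p2 q2))
  + c13 * l2_sq L N (gminus p1 q1) + c23 * l2_sq L N (gminus p2 q2).

(* The BDF2 scheme is a convex-concave splitting: the entropy [S] and the gradient energy
   are treated implicitly, the quadratic interaction energy [Hf] explicitly at the
   extrapolation [2 phi^n - phi^(n-1)].  Convexity bounds the energy increment by the pairing
   of the chemical potentials with the increments [phi^(n+1) - phi^n], up to a concave
   remainder.  Testing the scheme with [(-Delta_h)^(-1)] of the increments turns this pairing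
   into a BDF2 dissipation in the [(-1,h)] norm, and Young's inequality lets this dissipation,
   together with the stabilisation [A_i dt |grad_h (phi_i^(n+1) - phi_i^n)|^2], absorb the
   remainder; the given [A_i] are exactly what this absorption costs.  [(-Delta_h)^(-1)] exists
   on periodic mean-zero data because [-Delta_h + sum] is injective, hence surjective, on the
   finite-dimensional space of periodic grid functions. *)

From Pilot Require Import Defs.
From Stdlib Require Import Reals ZArith List ClassicalEpsilon.
Open Scope R_scope.
From Stdlib Require Import Lra Lia Psatz FunctionalExtensionality.
From HB Require Import structures.
From mathcomp Require ssreflect ssrfun ssrbool eqtype ssrnat seq fintype ssralg matrix mxalgebra Rstruct.
(* Re-import so that the grid operator [Dx] is not shadowed by [Reals.Dx]. *)
Import Defs.

(** * Finite sums *)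

Lemma sum1N_S n F : sum1N (Datatypes.S n) F = sum1N n F + F (Z.of_nat n + 1)%Z.
Proof.
  unfold sum1N. rewrite seq_S, map_app, fold_right_app. simpl.
  induction (map (fun k : nat => F (Z.of_nat k + 1)%Z) (seq 0 n)); simpl; lra.
Qed.

Lemma sum1N_ext n F G : (forall k, F k = G k) -> sum1N n F = sum1N n G.
Proof. intro H; induction n; [reflexivity|]. rewrite !sum1N_S, IHn, H; reflexivity. Qed.

Lemma sum1N_plus n F G : sum1N n (fun k => F k + G k) = sum1N n F + sum1N n G.
Proof. induction n; [cbn; lra|]. rewrite !sum1N_S, IHn; lra. Qed.

Lemma sum1N_scal n c F : sum1N n (fun k => c * F k) = c * sum1N n F.
Proof. induction n; [cbn; lra|]. rewrite !sum1N_S, IHn; lra. Qed.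

Lemma sum1N_const n c : sum1N n (fun _ => c) = INR n * c.
Proof. induction n; [cbn; lra|]. rewrite !sum1N_S, IHn, S_INR; lra. Qed.

Lemma sum1N_le n F G : (forall k, F k <= G k) -> sum1N n F <= sum1N n G.
Proof.
  intro H; induction n; [cbn; lra|].
  rewrite !sum1N_S; specialize (H (Z.of_nat n + 1)%Z); lra.
Qed.

Lemma sum1N_nonneg n F : (forall k, 0 <= F k) -> 0 <= sum1N n F.
Proof. intro H. rewrite <- (Rmult_0_r (INR n)), <- sum1N_const. apply sum1N_le, H. Qed.

Lemma sum1N_eq0_nonneg n F : (forall k, 0 <= F k) -> sum1N n F = 0 ->
  forall k, (1 <= k <= Z.of_nat n)%Z -> F k = 0.
Proof.
  intro H; induction n; intros Hs k Hk; [lia|].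
  rewrite sum1N_S in Hs.
  pose proof (sum1N_nonneg n F H). pose proof (H (Z.of_nat n + 1)%Z).
  destruct (Z.eq_dec k (Z.of_nat n + 1)) as [->|]; [lra|].
  apply IHn; [lra|lia].
Qed.

Lemma sum1N_shift n F : sum1N n (fun k => F (k - 1)%Z) = sum1N n F - F (Z.of_nat n) + F 0%Z.
Proof.
  induction n; [cbn; lra|]. rewrite !sum1N_S, IHn.
  replace (Z.of_nat n + 1 - 1)%Z with (Z.of_nat n) by lia.
  rewrite Nat2Z.inj_succ. unfold Z.succ. lra.
Qed.

Definition sum2 (N : nat) (F : grid) : R := sum1N N (fun i => sum1N N (fun j => F i j)).

Definition dot (N : nat) (f g : grid) : R := sum2 N (fun i j => f i j * g i j).

Lemma inner_dot h N f g : inner h N f g = h ^ 2 * dot N f g.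
Proof. reflexivity. Qed.

Section Sum2.
Variable N : nat.

Lemma sum2_ext F G : (forall i j, F i j = G i j) -> sum2 N F = sum2 N G.
Proof. intro H; unfold sum2; apply sum1N_ext; intro; apply sum1N_ext; auto. Qed.

Lemma sum2_plus F G : sum2 N (fun i j => F i j + G i j) = sum2 N F + sum2 N G.
Proof. unfold sum2. rewrite <- sum1N_plus. apply sum1N_ext; intro; apply sum1N_plus. Qed.

Lemma sum2_scal c F : sum2 N (fun i j => c * F i j) = c * sum2 N F.
Proof. unfold sum2. rewrite <- sum1N_scal. apply sum1N_ext; intro; apply sum1N_scal. Qed.

Lemma sum2_minus F G : sum2 N (fun i j => F i j - G i j) = sum2 N F - sum2 N G.
Proof.
  rewrite (sum2_ext _ (fun i j => F i j + (-1) * G i j)) by (intros; ring).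
  rewrite sum2_plus, sum2_scal; ring.
Qed.

Lemma sum2_le F G : (forall i j, F i j <= G i j) -> sum2 N F <= sum2 N G.
Proof. intro H; unfold sum2; apply sum1N_le; intro; apply sum1N_le; auto. Qed.

Lemma sum2_const c : sum2 N (fun _ _ => c) = INR N * (INR N * c).
Proof.
  unfold sum2. rewrite (sum1N_ext N _ (fun _ => INR N * c)) by (intro; apply sum1N_const).
  apply sum1N_const.
Qed.

Lemma sum2_eq0 F : (forall i j, F i j = 0) -> sum2 N F = 0.
Proof. intro H. rewrite (sum2_ext _ _ H), sum2_const. ring. Qed.

Lemma sum2_eq0_nonneg F : (forall i j, 0 <= F i j) -> sum2 N F = 0 ->
  forall i j, (1 <= i <= Z.of_nat N)%Z -> (1 <= j <= Z.of_nat N)%Z -> F i j = 0.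
Proof.
  intros H Hs i j Hi Hj.
  assert (Hrow : forall i, 0 <= sum1N N (fun j => F i j)) by (intro; apply sum1N_nonneg; auto).
  apply (sum1N_eq0_nonneg N (fun j => F i j) (H i)); auto.
  exact (sum1N_eq0_nonneg N _ Hrow Hs i Hi).
Qed.

Lemma dot_sym f g : dot N f g = dot N g f.
Proof. apply sum2_ext; intros; ring. Qed.

End Sum2.

(** * Periodic grid functions *)

Section Periodic.
Variables (N : nat) (h : R).

Lemma periodic_x f : periodic N f -> forall i j, f (i + Z.of_nat N)%Z j = f i j.
Proof. intros P i j. rewrite <- (P i j 1%Z 0%Z). f_equal; ring. Qed.

Lemma periodic_y f : periodic N f -> forall i j, f i (j + Z.of_nat N)%Z = f i j.
Proof. intros P i j. rewrite <- (P i j 0%Z 1%Z). f_equal; ring. Qed.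

Lemma periodic_const c : periodic N (gconst c).
Proof. intros i j a b; reflexivity. Qed.

Lemma periodic_map2 (F : R -> R -> R) f g :
  periodic N f -> periodic N g -> periodic N (fun i j => F (f i j) (g i j)).
Proof. intros Pf Pg i j a b. rewrite Pf, Pg. reflexivity. Qed.

Lemma periodic_shiftx d f : periodic N f -> periodic N (fun i j => f (i + d)%Z j).
Proof. intros P i j a b. rewrite <- (P (i + d)%Z j a b). f_equal; ring. Qed.

Lemma periodic_shifty d f : periodic N f -> periodic N (fun i j => f i (j + d)%Z).
Proof. intros P i j a b. rewrite <- (P i (j + d)%Z a b). f_equal; ring. Qed.

Ltac periodic_stencil F :=
  intro; apply (periodic_map2 F);
  solve [ assumption | apply periodic_shiftx; assumption | apply periodic_shifty; assumption ].

Lemma periodic_Ax f : periodic N f -> periodic N (Ax f).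
Proof. periodic_stencil (fun x y => (x + y) / 2). Qed.
Lemma periodic_Ay f : periodic N f -> periodic N (Ay f).
Proof. periodic_stencil (fun x y => (x + y) / 2). Qed.
Lemma periodic_Dx f : periodic N f -> periodic N (Dx h f).
Proof. periodic_stencil (fun x y => (x - y) / h). Qed.
Lemma periodic_Dy f : periodic N f -> periodic N (Dy h f).
Proof. periodic_stencil (fun x y => (x - y) / h). Qed.
Lemma periodic_ax f : periodic N f -> periodic N (ax f).
Proof. periodic_stencil (fun x y => (x + y) / 2). Qed.
Lemma periodic_ay f : periodic N f -> periodic N (ay f).
Proof. periodic_stencil (fun x y => (x + y) / 2). Qed.
Lemma periodic_dx f : periodic N f -> periodic N (dx h f).
Proof. periodic_stencil (fun x y => (x - y) / h). Qed.
Lemma periodic_dy f : periodic N f -> periodic N (dy h f).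
Proof. periodic_stencil (fun x y => (x - y) / h). Qed.

Lemma periodic_lap f : periodic N f -> periodic N (lap h f).
Proof.
  intro P. apply (periodic_map2 Rplus).
  - apply periodic_dx, periodic_Dx, P.
  - apply periodic_dy, periodic_Dy, P.
Qed.

Lemma periodic_gminus f g : periodic N f -> periodic N g -> periodic N (gminus f g).
Proof. apply periodic_map2. Qed.

Lemma periodic_u3 f g : periodic N f -> periodic N g -> periodic N (u3 f g).
Proof. apply (periodic_map2 (fun x y => 1 - x - y)). Qed.

Lemma periodic_Tk u : periodic N u -> periodic N (Tk h u).
Proof.
  intro P.
  assert (PAx := periodic_Ax u P). assert (PAy := periodic_Ay u P).
  assert (PDx := periodic_Dx u P). assert (PDy := periodic_Dy u P).
  intros i j a b; unfold Tk.
  rewrite (periodic_ax _ (periodic_map2 (fun s d => kappa' s * d ^ 2) _ _ PAx PDx)),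
    (periodic_dx _ (periodic_map2 (fun s d => kappa s * d) _ _ PAx PDx)),
    (periodic_ay _ (periodic_map2 (fun s d => kappa' s * d ^ 2) _ _ PAy PDy)),
    (periodic_dy _ (periodic_map2 (fun s d => kappa s * d) _ _ PAy PDy)).
  reflexivity.
Qed.

End Periodic.

(** * Summation by parts and the discrete Dirichlet form *)

Section SummationByParts.
Variables (N : nat) (h : R).
Hypothesis Hh : h <> 0.

Lemma sum2_shiftx F : periodic N F -> sum2 N (fun i j => F (i - 1)%Z j) = sum2 N F.
Proof.
  intro P; unfold sum2. rewrite (sum1N_shift N (fun i => sum1N N (fun j => F i j))).
  rewrite (sum1N_ext N (fun j => F (Z.of_nat N) j) (fun j => F 0%Z j)); [lra|].
  intro k; exact (periodic_x N F P 0%Z k).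
Qed.

Lemma sum2_shifty F : periodic N F -> sum2 N (fun i j => F i (j - 1)%Z) = sum2 N F.
Proof.
  intro P; unfold sum2. apply sum1N_ext; intro i.
  rewrite (sum1N_shift N (fun j => F i j)), <- (periodic_y N F P i 0%Z). simpl. lra.
Qed.

(* Both sides are rewritten as combinations of [F * g] and of [F * g(. + 1)], whose
   sum is invariant under the periodic shift. *)
Lemma dot_dx F g : periodic N F -> periodic N g ->
  dot N (dx h F) g = - dot N F (Dx h g).
Proof.
  intros PF Pg. unfold dot.
  set (G := fun i j => F i j * g (i + 1)%Z j).
  assert (PG : periodic N G) by (apply (periodic_map2 N Rmult); [|apply periodic_shiftx]; auto).
  rewrite (sum2_ext N _ (fun i j => (1/h) * (F i j * g i j) + (-(1/h)) * G (i - 1)%Z j)).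
  2:{ intros i j; unfold dx, G. replace (i - 1 + 1)%Z with i by ring. field. auto. }
  rewrite (sum2_ext N (fun i j => F i j * Dx h g i j)
             (fun i j => (1/h) * G i j + (-(1/h)) * (F i j * g i j))).
  2:{ intros i j; unfold Dx, G. field. auto. }
  rewrite !sum2_plus, !sum2_scal, (sum2_shiftx G PG). ring.
Qed.

Lemma dot_dy F g : periodic N F -> periodic N g ->
  dot N (dy h F) g = - dot N F (Dy h g).
Proof.
  intros PF Pg. unfold dot.
  set (G := fun i j => F i j * g i (j + 1)%Z).
  assert (PG : periodic N G) by (apply (periodic_map2 N Rmult); [|apply periodic_shifty]; auto).
  rewrite (sum2_ext N _ (fun i j => (1/h) * (F i j * g i j) + (-(1/h)) * G i (j - 1)%Z)).
  2:{ intros i j; unfold dy, G. replace (j - 1 + 1)%Z with j by ring. field. auto. }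
  rewrite (sum2_ext N (fun i j => F i j * Dy h g i j)
             (fun i j => (1/h) * G i j + (-(1/h)) * (F i j * g i j))).
  2:{ intros i j; unfold Dy, G. field. auto. }
  rewrite !sum2_plus, !sum2_scal, (sum2_shifty G PG). ring.
Qed.

Lemma dot_ax F g : periodic N F -> periodic N g -> dot N (ax F) g = dot N F (Ax g).
Proof.
  intros PF Pg. unfold dot.
  set (G := fun i j => F i j * g (i + 1)%Z j).
  assert (PG : periodic N G) by (apply (periodic_map2 N Rmult); [|apply periodic_shiftx]; auto).
  rewrite (sum2_ext N _ (fun i j => (1/2) * (F i j * g i j) + (1/2) * G (i - 1)%Z j)).
  2:{ intros i j; unfold ax, G. replace (i - 1 + 1)%Z with i by ring. field. }
  rewrite (sum2_ext N (fun i j => F i j * Ax g i j)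
             (fun i j => (1/2) * G i j + (1/2) * (F i j * g i j))).
  2:{ intros i j; unfold Ax, G. field. }
  rewrite !sum2_plus, !sum2_scal, (sum2_shiftx G PG). ring.
Qed.

Lemma dot_ay F g : periodic N F -> periodic N g -> dot N (ay F) g = dot N F (Ay g).
Proof.
  intros PF Pg. unfold dot.
  set (G := fun i j => F i j * g i (j + 1)%Z).
  assert (PG : periodic N G) by (apply (periodic_map2 N Rmult); [|apply periodic_shifty]; auto).
  rewrite (sum2_ext N _ (fun i j => (1/2) * (F i j * g i j) + (1/2) * G i (j - 1)%Z)).
  2:{ intros i j; unfold ay, G. replace (j - 1 + 1)%Z with j by ring. field. }
  rewrite (sum2_ext N (fun i j => F i j * Ay g i j)
             (fun i j => (1/2) * G i j + (1/2) * (F i j * g i j))).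
  2:{ intros i j; unfold Ay, G. field. }
  rewrite !sum2_plus, !sum2_scal, (sum2_shifty G PG). ring.
Qed.

End SummationByParts.

Definition dirichlet (h : R) (N : nat) (f g : grid) : R := inner h N (fun i j => - lap h f i j) g.

Section Dirichlet.
Variables (N : nat) (h : R).
Hypothesis Hh : h <> 0.

Lemma inner_sym f g : inner h N f g = inner h N g f.
Proof. rewrite !inner_dot, dot_sym. reflexivity. Qed.

Lemma dirichlet_grad f g : periodic N f -> periodic N g ->
  dirichlet h N f g = inner h N (Dx h f) (Dx h g) + inner h N (Dy h f) (Dy h g).
Proof.
  intros Pf Pg. unfold dirichlet. rewrite !inner_dot. unfold dot.
  rewrite (sum2_ext N _ (fun i j => (-1) * (dx h (Dx h f) i j * g i j)
                                   + (-1) * (dy h (Dy h f) i j * g i j))).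
  2:{ intros i j; unfold lap; ring. }
  rewrite sum2_plus, !sum2_scal.
  fold (dot N (dx h (Dx h f)) g) (dot N (dy h (Dy h f)) g).
  rewrite dot_dx, dot_dy by (auto using periodic_Dx, periodic_Dy). unfold dot; ring.
Qed.

Lemma dirichlet_sym f g : periodic N f -> periodic N g -> dirichlet h N f g = dirichlet h N g f.
Proof.
  intros Pf Pg. rewrite !dirichlet_grad by auto.
  rewrite (inner_sym (Dx h f)), (inner_sym (Dy h f)). reflexivity.
Qed.

Lemma dirichlet_young f g t a : periodic N f -> periodic N g -> 0 < t ->
  2 * a * dirichlet h N f g <= t * dirichlet h N f f + a ^ 2 / t * dirichlet h N g g.
Proof.
  intros Pf Pg Ht. rewrite !dirichlet_grad by auto. rewrite !inner_dot. unfold dot.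
  set (sq := fun p q => ((t * p - a * q) ^ 2) / t).
  assert (Hsq : forall p q, 2 * a * (p * q) + sq p q = t * (p * p) + a ^ 2 / t * (q * q)).
  { intros p q; unfold sq; field; lra. }
  assert (Hsq0 : forall p q, 0 <= sq p q) by (intros; apply Rle_mult_inv_pos; [apply pow2_ge_0|lra]).
  assert (S0 : forall u v, 0 <= sum2 N (fun i j => sq (u i j) (v i j))).
  { intros u v. unfold sum2. apply sum1N_nonneg; intro; apply sum1N_nonneg; auto. }
  assert (E : forall u v, 2 * a * sum2 N (fun i j => u i j * v i j)
                 + sum2 N (fun i j => sq (u i j) (v i j))
               = t * sum2 N (fun i j => u i j * u i j) + a ^ 2 / t * sum2 N (fun i j => v i j * v i j)).
  { intros u v. rewrite <- !sum2_scal, <- !sum2_plus. apply sum2_ext; auto. }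
  pose proof (E (Dx h f) (Dx h g)); pose proof (E (Dy h f) (Dy h g)).
  pose proof (S0 (Dx h f) (Dx h g)); pose proof (S0 (Dy h f) (Dy h g)).
  assert (0 <= h ^ 2) by apply pow2_ge_0.
  nra.
Qed.

Lemma sum2_lap g : periodic N g -> sum2 N (lap h g) = 0.
Proof.
  intro Pg.
  assert (Dconst : Dx h (gconst 1) = gconst 0 /\ Dy h (gconst 1) = gconst 0).
  { split; do 2 (apply functional_extensionality; intro); unfold Dx, Dy, gconst; field; auto. }
  assert (E : dot N (fun i j => - lap h g i j) (gconst 1) = 0).
  { apply (Rmult_eq_reg_l (h ^ 2)); [|apply pow_nonzero; auto].
    rewrite <- inner_dot. fold (dirichlet h N g (gconst 1)).
    rewrite dirichlet_grad, (proj1 Dconst), (proj2 Dconst) by auto using periodic_const.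
    rewrite !inner_dot. unfold dot, gconst.
    rewrite !sum2_eq0 by (intros; ring). ring. }
  unfold dot, gconst in E.
  rewrite (sum2_ext N (fun i j => - lap h g i j * 1) (fun i j => (-1) * lap h g i j)) in E
    by (intros; ring).
  rewrite sum2_scal in E. lra.
Qed.

End Dirichlet.

(** * Convexity of the energy *)

Lemma kappa_sq_sub_le s s' p p' : 0 < s -> 0 < s' ->
  kappa s * p ^ 2 - kappa s' * p' ^ 2 <= kappa' s * p ^ 2 * (s - s') + 2 * (kappa s * p) * (p - p').
Proof.
  intros Hs Hs'. unfold kappa, kappa'.
  assert (E : - 1 / (36 * s ^ 2) * p ^ 2 * (s - s') + 2 * (1 / (36 * s) * p) * (p - p')
              - (1 / (36 * s) * p ^ 2 - 1 / (36 * s') * p' ^ 2)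
              = (p' * s - p * s') ^ 2 / (36 * s' * s ^ 2)) by (field; lra).
  assert (0 <= (p' * s - p * s') ^ 2 / (36 * s' * s ^ 2)).
  { apply Rle_mult_inv_pos; [apply pow2_ge_0|]. apply Rmult_lt_0_compat; [lra|apply pow_lt; lra]. }
  lra.
Qed.

Section GradientEnergy.
Variables (N : nat) (h : R).
Hypothesis Hh : h <> 0.

Lemma dot_grad_dens u : periodic N u ->
  dot N (grad_dens h u) (gconst 1)
  = sum2 N (fun i j => kappa (Ax u i j) * Dx h u i j ^ 2 + kappa (Ay u i j) * Dy h u i j ^ 2).
Proof.
  intro P. unfold dot, grad_dens.
  rewrite (sum2_ext N _ (fun i j => ax (fun p q => kappa (Ax u p q) * Dx h u p q ^ 2) i j * gconst 1 i j
                                  + ay (fun p q => kappa (Ay u p q) * Dy h u p q ^ 2) i j * gconst 1 i j))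
    by (intros; ring).
  rewrite sum2_plus. fold (dot N (ax (fun p q => kappa (Ax u p q) * Dx h u p q ^ 2)) (gconst 1))
    (dot N (ay (fun p q => kappa (Ay u p q) * Dy h u p q ^ 2)) (gconst 1)).
  assert (PX : periodic N (fun p q => kappa (Ax u p q) * Dx h u p q ^ 2))
    by (apply (periodic_map2 N (fun s d => kappa s * d ^ 2)); auto using periodic_Ax, periodic_Dx).
  assert (PY : periodic N (fun p q => kappa (Ay u p q) * Dy h u p q ^ 2))
    by (apply (periodic_map2 N (fun s d => kappa s * d ^ 2)); auto using periodic_Ay, periodic_Dy).
  rewrite dot_ax, dot_ay by auto using periodic_const.
  unfold dot. rewrite <- sum2_plus. apply sum2_ext; intros; unfold Ax, Ay, gconst; field.
Qed.

Lemma dot_Tk u w : periodic N u -> periodic N w ->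
  dot N (Tk h u) w
  = sum2 N (fun i j => kappa' (Ax u i j) * Dx h u i j ^ 2 * Ax w i j
                       + 2 * (kappa (Ax u i j) * Dx h u i j) * Dx h w i j
                       + (kappa' (Ay u i j) * Dy h u i j ^ 2 * Ay w i j
                          + 2 * (kappa (Ay u i j) * Dy h u i j) * Dy h w i j)).
Proof.
  intros P Pw.
  set (Fx' := fun p q => kappa' (Ax u p q) * Dx h u p q ^ 2).
  set (Fx := fun p q => kappa (Ax u p q) * Dx h u p q).
  set (Fy' := fun p q => kappa' (Ay u p q) * Dy h u p q ^ 2).
  set (Fy := fun p q => kappa (Ay u p q) * Dy h u p q).
  assert (PFx' : periodic N Fx') by (apply (periodic_map2 N (fun s d => kappa' s * d ^ 2));
                                     auto using periodic_Ax, periodic_Dx).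
  assert (PFx : periodic N Fx) by (apply (periodic_map2 N (fun s d => kappa s * d));
                                   auto using periodic_Ax, periodic_Dx).
  assert (PFy' : periodic N Fy') by (apply (periodic_map2 N (fun s d => kappa' s * d ^ 2));
                                     auto using periodic_Ay, periodic_Dy).
  assert (PFy : periodic N Fy) by (apply (periodic_map2 N (fun s d => kappa s * d));
                                   auto using periodic_Ay, periodic_Dy).
  unfold dot.
  rewrite (sum2_ext N _ (fun i j => (ax Fx' i j * w i j + (-2) * (dx h Fx i j * w i j))
                                  + (ay Fy' i j * w i j + (-2) * (dy h Fy i j * w i j))))
    by (intros; unfold Tk; fold Fx' Fx Fy' Fy; ring).
  rewrite !sum2_plus, !sum2_scal.
  fold (dot N (ax Fx') w) (dot N (dx h Fx) w) (dot N (ay Fy') w) (dot N (dy h Fy) w).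
  rewrite dot_ax, dot_ay, dot_dx, dot_dy by auto.
  transitivity (sum2 N (fun i j => Fx' i j * Ax w i j) + 2 * sum2 N (fun i j => Fx i j * Dx h w i j)
                + (sum2 N (fun i j => Fy' i j * Ay w i j) + 2 * sum2 N (fun i j => Fy i j * Dy h w i j))).
  { unfold dot; ring. }
  rewrite <- !sum2_scal, <- !sum2_plus. apply sum2_ext; intros; unfold Fx', Fx, Fy', Fy; ring.
Qed.

Lemma dot_grad_dens_sub_le u v : periodic N u -> periodic N v ->
  (forall i j, 0 < u i j) -> (forall i j, 0 < v i j) ->
  dot N (grad_dens h u) (gconst 1) - dot N (grad_dens h v) (gconst 1) <= dot N (Tk h u) (gminus u v).
Proof.
  intros Pu Pv Hu Hv.
  rewrite !dot_grad_dens, dot_Tk, <- sum2_minus by auto using periodic_gminus.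
  apply sum2_le; intros i j.
  assert (Apos : forall w, (forall i j, 0 < w i j) -> 0 < Ax w i j /\ 0 < Ay w i j).
  { intros w Hw; unfold Ax, Ay.
    pose proof (Hw (i + 1)%Z j); pose proof (Hw i (j + 1)%Z); pose proof (Hw i j). lra. }
  destruct (Apos u Hu) as [Axu Ayu], (Apos v Hv) as [Axv Ayv].
  pose proof (kappa_sq_sub_le _ _ (Dx h u i j) (Dx h v i j) Axu Axv).
  pose proof (kappa_sq_sub_le _ _ (Dy h u i j) (Dy h v i j) Ayu Ayv).
  replace (Ax (gminus u v) i j) with (Ax u i j - Ax v i j) by (unfold Ax, gminus; field).
  replace (Ay (gminus u v) i j) with (Ay u i j - Ay v i j) by (unfold Ay, gminus; field).
  replace (Dx h (gminus u v) i j) with (Dx h u i j - Dx h v i j) by (unfold Dx, gminus; field; auto).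
  replace (Dy h (gminus u v) i j) with (Dy h u i j - Dy h v i j) by (unfold Dy, gminus; field; auto).
  lra.
Qed.

End GradientEnergy.

Lemma xlnkx_sub_le k x y : 0 < k -> 0 < x -> 0 < y ->
  x * ln (k * x) - y * ln (k * y) <= (ln (k * x) + 1) * (x - y).
Proof.
  intros Hk Hx Hy.
  assert (Hkx : 0 < k * x) by nra. assert (Hky : 0 < k * y) by nra.
  assert (Hln : ln (k * x) - ln (k * y) <= x / y - 1).
  { replace (ln (k * x) - ln (k * y)) with (ln (k * x / (k * y))).
    2:{ unfold Rdiv. rewrite ln_mult, ln_Rinv; [ring|auto|auto|apply Rinv_0_lt_compat; auto]. }
    replace (x / y) with (k * x / (k * y)) by (field; lra).
    pose proof (exp_ineq1_le (ln (k * x / (k * y)))) as E.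
    rewrite exp_ln in E by (apply Rdiv_lt_0_compat; auto). lra. }
  assert (y * (ln (k * x) - ln (k * y)) <= x - y).
  { replace (x - y) with (y * (x / y - 1)) by (field; lra). apply Rmult_le_compat_l; lra. }
  lra.
Qed.

Lemma alpha_pos M0 N0 : 0 < M0 -> 0 < N0 -> 0 < alpha M0 N0.
Proof.
  intros. unfold alpha. apply Rmult_lt_0_compat; [apply PI_RGT_0|].
  pose proof (sqrt_pos (M0 / PI)). apply pow_lt; lra.
Qed.

Lemma beta_pos M0 N0 : 0 < M0 -> 0 < N0 -> 0 < beta M0 N0.
Proof. intros. unfold beta. pose proof (sqrt_pos (M0 / PI)). lra. Qed.

Lemma S_sub_le M0 N0 P1 P2 B1 B2 : 0 < M0 -> 0 < N0 ->
  0 < P1 -> 0 < P2 -> P1 + P2 < 1 -> 0 < B1 -> 0 < B2 -> B1 + B2 < 1 ->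
  S M0 N0 P1 P2 - S M0 N0 B1 B2
  <= dS_a M0 N0 P1 P2 * (P1 - B1) + dS_b M0 N0 P1 P2 * (P2 - B2).
Proof.
  intros HM HN HP1 HP2 HP HB1 HB2 HB.
  assert (Ka : 0 < alpha M0 N0 / M0) by (apply Rdiv_lt_0_compat; auto using alpha_pos).
  assert (Kb : 0 < beta M0 N0 / N0) by (apply Rdiv_lt_0_compat; auto using beta_pos).
  pose proof (xlnkx_sub_le _ P1 B1 Ka HP1 HB1) as E1.
  pose proof (xlnkx_sub_le _ P2 B2 Kb HP2 HB2) as E2.
  pose proof (xlnkx_sub_le 1 (1 - P1 - P2) (1 - B1 - B2) Rlt_0_1 ltac:(lra) ltac:(lra)) as E3.
  rewrite !Rmult_1_l in E3.
  apply (Rmult_le_compat_l (/ M0)) in E1; [|left; apply Rinv_0_lt_compat; auto].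
  apply (Rmult_le_compat_l (/ N0)) in E2; [|left; apply Rinv_0_lt_compat; auto].
  assert (Ra : forall x, alpha M0 N0 * x / M0 = alpha M0 N0 / M0 * x) by (intro; field; lra).
  assert (Rb : forall x, beta M0 N0 * x / N0 = beta M0 N0 / N0 * x) by (intro; field; lra).
  unfold S, dS_a, dS_b. rewrite !Ra, !Rb.
  unfold Rdiv in *. nra.
Qed.

(* Exact Taylor expansion of the quadratic [Hf] around [B] with the gradient moved to the
   extrapolation [2 B - A]; the remainder is bounded using [4 c13 c23 > (c12 - c13 - c23)^2]. *)
Lemma Hf_sub_le c12 c13 c23 A1 A2 B1 B2 P1 P2 : 0 < c13 -> 0 < c23 ->
  4 * c13 * c23 - (c12 - c13 - c23) ^ 2 > 0 ->
  Hf c12 c13 c23 P1 P2 - Hf c12 c13 c23 B1 B2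
  + c13 * ((P1 - B1) * (P1 - B1) - (B1 - A1) * (B1 - A1))
  + c23 * ((P2 - B2) * (P2 - B2) - (B2 - A2) * (B2 - A2))
  <= dH_a c12 c13 c23 (2 * B1 - A1) (2 * B2 - A2) * (P1 - B1)
     + dH_b c12 c13 c23 (2 * B1 - A1) (2 * B2 - A2) * (P2 - B2)
     + 2 * c13 * ((P1 - B1) * (P1 - B1)) + 2 * c23 * ((P2 - B2) * (P2 - B2))
     - (c12 - c13 - c23) * ((B1 - A1) * (P2 - B2) + (B2 - A2) * (P1 - B1)).
Proof.
  intros Hc13 Hc23 Hchi.
  assert (Hcross : forall x y, (c12 - c13 - c23) * x * y <= c13 * x ^ 2 + c23 * y ^ 2).
  { intros x y. pose proof (pow2_ge_0 (2 * c13 * x - (c12 - c13 - c23) * y)).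
    assert (0 <= (4 * c13 * c23 - (c12 - c13 - c23) ^ 2) * y ^ 2)
      by (apply Rmult_le_pos; [apply Rlt_le, Hchi|apply pow2_ge_0]).
    nra. }
  pose proof (Hcross (P1 - B1) (P2 - B2)).
  assert (0 <= c13 * ((B1 - A1) - (P1 - B1)) ^ 2) by (apply Rmult_le_pos; [lra|apply pow2_ge_0]).
  assert (0 <= c23 * ((B2 - A2) - (P2 - B2)) ^ 2) by (apply Rmult_le_pos; [lra|apply pow2_ge_0]).
  unfold Hf, dH_a, dH_b. nra.
Qed.

(** * The inverse discrete Laplacian *)

(* Unlike [-Delta_h], this operator is injective on periodic grid functions. *)
Definition neg_lap_sum (h : R) (N : nat) (g : grid) : grid := fun i j => - lap h g i j + sum2 N g.

Lemma Z_step_invariant (f : Z -> R) : (forall z, f (z + 1)%Z = f z) -> forall z, f z = f 0%Z.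
Proof.
  intros H.
  assert (Hn : forall m, f (Z.of_nat m) = f 0%Z /\ f (- Z.of_nat m)%Z = f 0%Z).
  { induction m as [|m [IHp IHm]]; [split; reflexivity|]. rewrite Nat2Z.inj_succ. split.
    - unfold Z.succ; rewrite H; auto.
    - rewrite <- IHm, <- (H (- Z.succ (Z.of_nat m))%Z). f_equal; lia. }
  intro z. destruct (Z_le_gt_dec 0 z) as [Hz|Hz].
  - destruct (Z_of_nat_complete z Hz) as [m ->]. apply Hn.
  - destruct (Z_of_nat_complete (- z) ltac:(lia)) as [m Hm].
    replace z with (- Z.of_nat m)%Z by lia. apply Hn.
Qed.

Lemma periodic_eq_box N f g : (0 < N)%nat -> periodic N f -> periodic N g ->
  (forall i j, (1 <= i <= Z.of_nat N)%Z -> (1 <= j <= Z.of_nat N)%Z -> f i j = g i j) ->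
  forall i j, f i j = g i j.
Proof.
  intros HN Pf Pg H i j.
  assert (HNz : (0 < Z.of_nat N)%Z) by lia.
  pose proof (Z.div_mod (i - 1) (Z.of_nat N) ltac:(lia)) as Ei.
  pose proof (Z.div_mod (j - 1) (Z.of_nat N) ltac:(lia)) as Ej.
  pose proof (Z.mod_pos_bound (i - 1) (Z.of_nat N) HNz).
  pose proof (Z.mod_pos_bound (j - 1) (Z.of_nat N) HNz).
  replace i with ((i - 1) mod Z.of_nat N + 1 + (i - 1) / Z.of_nat N * Z.of_nat N)%Z by lia.
  replace j with ((j - 1) mod Z.of_nat N + 1 + (j - 1) / Z.of_nat N * Z.of_nat N)%Z by lia.
  rewrite Pf, Pg. apply H; lia.
Qed.

Section NegLapSum.
Variables (N : nat) (h : R).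
Hypotheses (HN : (0 < N)%nat) (Hh : h <> 0).

Lemma periodic_neg_lap_sum g : periodic N g -> periodic N (neg_lap_sum h N g).
Proof. intros P i j a b. unfold neg_lap_sum. rewrite (periodic_lap N h g P). reflexivity. Qed.

Lemma neg_lap_sum_linear a f g i j :
  neg_lap_sum h N (fun x y => a * f x y + g x y) i j = a * neg_lap_sum h N f i j + neg_lap_sum h N g i j.
Proof. unfold neg_lap_sum. rewrite sum2_plus, sum2_scal. unfold lap, dx, dy, Dx, Dy, Rdiv. ring. Qed.

Lemma sum2_neg_lap_sum g : periodic N g -> sum2 N (neg_lap_sum h N g) = INR N * (INR N * sum2 N g).
Proof.
  intro P. unfold neg_lap_sum. rewrite sum2_plus, sum2_const.
  rewrite (sum2_ext N _ (fun i j => (-1) * lap h g i j)) by (intros; ring).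
  rewrite sum2_scal. change (sum2 N (fun i j => lap h g i j)) with (sum2 N (lap h g)).
  rewrite sum2_lap by auto. ring.
Qed.

(* A periodic grid function with vanishing Laplacian has vanishing discrete gradient,
   hence is constant; the added sum then forces the constant to be zero. *)
Lemma neg_lap_sum_inj g : periodic N g -> (forall i j, neg_lap_sum h N g i j = 0) ->
  forall i j, g i j = 0.
Proof.
  intros Pg HT.
  assert (HNr : 0 < INR N) by (apply lt_0_INR; lia).
  assert (Hsum : sum2 N g = 0).
  { pose proof (sum2_neg_lap_sum g Pg) as E. rewrite sum2_eq0 in E by auto.
    apply (Rmult_eq_reg_l (INR N * INR N)); nra. }
  assert (Hlap : forall i j, - lap h g i j = 0).
  { intros i j. specialize (HT i j). unfold neg_lap_sum in HT. lra. }
  assert (Hgrad : sum2 N (fun i j => Dx h g i j * Dx h g i j + Dy h g i j * Dy h g i j) = 0).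
  { assert (E := dirichlet_grad N h Hh g g Pg Pg).
    unfold dirichlet in E. rewrite !inner_dot in E.
    rewrite sum2_plus. apply (Rmult_eq_reg_l (h ^ 2)); [|apply pow_nonzero; auto].
    unfold dot in E. rewrite sum2_eq0 in E by (intros; rewrite Hlap; ring).
    rewrite Rmult_plus_distr_l, <- E. reflexivity. }
  assert (Hbox := sum2_eq0_nonneg N (fun i j => Dx h g i j * Dx h g i j + Dy h g i j * Dy h g i j)
                   ltac:(intros; nra) Hgrad).
  assert (HD : forall i j, Dx h g i j = 0 /\ Dy h g i j = 0).
  { intros i j. split.
    - apply (periodic_eq_box N (Dx h g) (gconst 0)); auto using periodic_Dx, periodic_const.
      intros i' j' Hi Hj. specialize (Hbox i' j' Hi Hj). unfold gconst. nra.
    - apply (periodic_eq_box N (Dy h g) (gconst 0)); auto using periodic_Dy, periodic_const.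
      intros i' j' Hi Hj. specialize (Hbox i' j' Hi Hj). unfold gconst. nra. }
  assert (Hstep : forall i j, g (i + 1)%Z j = g i j /\ g i (j + 1)%Z = g i j).
  { intros i j. destruct (HD i j) as [Hx Hy]. unfold Dx, Dy in Hx, Hy.
    split; apply Rminus_diag_uniq, (Rmult_eq_reg_r (/ h)); rewrite ?Rmult_0_l;
      auto using Rinv_neq_0_compat. }
  assert (Hconst : forall i j, g i j = g 0%Z 0%Z).
  { intros i j. rewrite (Z_step_invariant (fun y => g i y) (fun y => proj2 (Hstep i y)) j).
    exact (Z_step_invariant (fun x => g x 0%Z) (fun x => proj1 (Hstep x 0%Z)) i). }
  rewrite (sum2_ext N _ (fun _ _ => g 0%Z 0%Z)), sum2_const in Hsum by auto.
  intros i j. rewrite Hconst. apply (Rmult_eq_reg_l (INR N * INR N)); nra.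
Qed.

End NegLapSum.

Module GridMatrix.
Import ssreflect ssrfun ssrbool eqtype ssrnat seq fintype ssralg matrix Rstruct.
Import GRing.Theory.
Local Open Scope ring_scope.

Section InjectiveLinearSurjective.
Variable n : nat.
Variable F : 'M[R]_(n, n) -> 'M[R]_(n, n).
Hypothesis F_linear : forall (a : R) X Y, F (a *: X + Y) = a *: F X + F Y.
Hypothesis F_inj : forall X, F X = 0 -> X = 0.

Let F_linear_for : GRing.linear_for *:%R F. Proof. move=> a X Y; exact: F_linear. Qed.
HB.instance Definition _ := GRing.isLinear.Build R 'M[R]_(n, n) 'M[R]_(n, n) *:%R F F_linear_for.

Lemma linear_inj_surj Y : exists X, F X = Y.
Proof.
  have Hu : lin_mx F \in unitmx.
  { rewrite unitmxE unitfE. apply/negP => /det0P [v nv0 Hv].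
    move: (mul_rV_lin F v). rewrite Hv => H0.
    have : F (vec_mx v) = 0 by apply: (can_inj mxvecK); rewrite -H0 linear0.
    move/F_inj => Hv0. move/eqP: nv0; apply. by rewrite -(vec_mxK v) Hv0 linear0. }
  exists (vec_mx (mxvec Y *m invmx (lin_mx F))).
  apply: (can_inj mxvecK). by rewrite -mul_rV_lin mulmxKV.
Qed.
End InjectiveLinearSurjective.

Section Bridge.
Variable m : nat.
Let N := m.+1.

(* Cell [i] of the grid is stored in row [(i - 1) mod N] of an [N x N] matrix. *)
Definition cell_index (z : Z) : 'I_N := inord (Z.to_nat ((z - 1) mod Z.of_nat N)).
Definition grid_of_mx (X : 'M[R]_(N, N)) : grid := fun i j => X (cell_index i) (cell_index j).
Definition mx_of_grid (f : grid) : 'M[R]_(N, N) :=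
  \matrix_(i, j) f (Z.of_nat (nat_of_ord i) + 1)%Z (Z.of_nat (nat_of_ord j) + 1)%Z.

Lemma cell_index_ord (i : 'I_N) : cell_index (Z.of_nat (nat_of_ord i) + 1)%Z = i.
Proof.
  rewrite /cell_index. have Hi := ltn_ord i.
  have -> : (Z.of_nat (nat_of_ord i) + 1 - 1)%Z = Z.of_nat (nat_of_ord i) by lia.
  rewrite Z.mod_small; last by move/ssrnat.ltP: Hi; lia.
  by rewrite Nat2Z.id inord_val.
Qed.

Lemma mx_of_gridK X : mx_of_grid (grid_of_mx X) = X.
Proof. apply/matrixP => i j; by rewrite /mx_of_grid /grid_of_mx mxE !cell_index_ord. Qed.

Lemma periodic_grid_of_mx X : periodic N (grid_of_mx X).
Proof.
  move=> i j a b; rewrite /grid_of_mx /cell_index.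
  have -> : (i + a * Z.of_nat N - 1)%Z = ((i - 1) + a * Z.of_nat N)%Z by lia.
  have -> : (j + b * Z.of_nat N - 1)%Z = ((j - 1) + b * Z.of_nat N)%Z by lia.
  by rewrite !Z_mod_plus_full.
Qed.

Lemma mx_of_grid_inj f g : periodic N f -> periodic N g -> mx_of_grid f = mx_of_grid g ->
  forall i j, f i j = g i j.
Proof.
  move=> Pf Pg E. apply: (periodic_eq_box N f g) => //; first by rewrite /N; lia.
  move=> i j Hi Hj.
  have Hi' : (Z.to_nat (i - 1) < N)%N by apply/ssrnat.ltP; lia.
  have Hj' : (Z.to_nat (j - 1) < N)%N by apply/ssrnat.ltP; lia.
  move/matrixP: E => /(_ (Ordinal Hi') (Ordinal Hj')). rewrite !mxE /=.
  have -> : (Z.of_nat (Z.to_nat (i - 1)) + 1)%Z = i by lia.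
  by have -> : (Z.of_nat (Z.to_nat (j - 1)) + 1)%Z = j by lia.
Qed.

Lemma neg_lap_sum_surj h nu : h <> 0%R -> periodic N nu ->
  exists g, periodic N g /\ forall i j, neg_lap_sum h N g i j = nu i j.
Proof.
  move=> Hh Pnu.
  pose F := fun X => mx_of_grid (neg_lap_sum h N (grid_of_mx X)).
  have F_linear : forall (a : R) X Y, F (a *: X + Y) = a *: F X + F Y.
  { move=> a X Y. apply/matrixP => i j. rewrite /F !mxE.
    have -> : grid_of_mx (a *: X + Y) = (fun x y => Rmult a (grid_of_mx X x y) + grid_of_mx Y x y)%R.
    { apply: functional_extensionality => x; apply: functional_extensionality => y.
      by rewrite /grid_of_mx !mxE. }
    exact: neg_lap_sum_linear. }
  have F_inj : forall X, F X = 0 -> X = 0.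
  { move=> X HX. rewrite -(mx_of_gridK X).
    have E : forall i j, grid_of_mx X i j = 0%R.
    { apply: (neg_lap_sum_inj N h) => //; first by rewrite /N; lia.
      - exact: periodic_grid_of_mx.
      - apply: (mx_of_grid_inj _ (gconst 0%R));
          [exact: periodic_neg_lap_sum (periodic_grid_of_mx X) | exact: periodic_const |].
        change (F X = mx_of_grid (gconst 0%R)). rewrite HX. apply/matrixP => i j; by rewrite !mxE. }
    apply/matrixP => i j; by rewrite !mxE E. }
  have [X HX] := @linear_inj_surj _ F F_linear F_inj (mx_of_grid nu).
  exists (grid_of_mx X); split; first exact: periodic_grid_of_mx.
  apply: mx_of_grid_inj => //. exact: periodic_neg_lap_sum (periodic_grid_of_mx X).
Qed.
End Bridge.
End GridMatrix.

Lemma mean_sum2 L N f : 0 < L -> (0 < N)%nat -> mean L N f = sum2 N f / INR N ^ 2.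
Proof.
  intros HL HN. assert (0 < INR N) by (apply lt_0_INR; lia).
  unfold mean. rewrite inner_dot. unfold dot.
  rewrite (sum2_ext N _ f) by (intros; unfold gconst; ring).
  field. split; lra.
Qed.

Lemma mean_gminus L N f g : 0 < L -> (0 < N)%nat -> mean L N (gminus f g) = mean L N f - mean L N g.
Proof.
  intros HL HN. rewrite !mean_sum2 by auto. unfold gminus.
  rewrite (sum2_minus N f g). unfold Rdiv; ring.
Qed.

Lemma inv_neg_lap_spec L N nu : 0 < L -> (0 < N)%nat -> periodic N nu -> mean L N nu = 0 ->
  periodic N (inv_neg_lap L N nu) /\ forall i j, - lap (L / INR N) (inv_neg_lap L N nu) i j = nu i j.
Proof.
  intros HL HN Pnu Hmean.
  assert (HNr : 0 < INR N) by (apply lt_0_INR; lia).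
  assert (Hh : L / INR N <> 0) by (apply Rgt_not_eq, Rdiv_lt_0_compat; lra).
  assert (Hs : sum2 N nu = 0).
  { rewrite mean_sum2 in Hmean by auto.
    apply (Rmult_eq_reg_r (/ INR N ^ 2)); [lra|]. apply Rinv_neq_0_compat, pow_nonzero; lra. }
  assert (Hspec : periodic N (inv_neg_lap L N nu) /\ mean L N (inv_neg_lap L N nu) = 0 /\
                  forall i j, - lap (L / INR N) (inv_neg_lap L N nu) i j = nu i j).
  { unfold inv_neg_lap. apply epsilon_spec.
    destruct N as [|m]; [lia|].
    destruct (GridMatrix.neg_lap_sum_surj m (L / INR (Datatypes.S m)) nu Hh Pnu) as [g [Pg Hg]].
    assert (Hsg : sum2 (Datatypes.S m) g = 0).
    { pose proof (sum2_neg_lap_sum _ _ Hh g Pg) as E.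
      rewrite (sum2_ext _ _ nu Hg), Hs in E.
      apply (Rmult_eq_reg_l (INR (Datatypes.S m) * INR (Datatypes.S m))); nra. }
    exists g. split; [exact Pg|split].
    - rewrite mean_sum2, Hsg by auto. unfold Rdiv; ring.
    - intros i j. rewrite <- (Hg i j). unfold neg_lap_sum. rewrite Hsg. ring. }
  tauto.
Qed.

Lemma inv_neg_lap_gminus L N f g : 0 < L -> (0 < N)%nat -> periodic N f -> periodic N g ->
  mean L N g = mean L N f ->
  periodic N (inv_neg_lap L N (gminus f g))
  /\ forall i j, - lap (L / INR N) (inv_neg_lap L N (gminus f g)) i j = gminus f g i j.
Proof.
  intros HL HN Pf Pg E. apply inv_neg_lap_spec; auto using periodic_gminus.
  rewrite mean_gminus, E by auto. ring.
Qed.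

(** * The energy estimate *)

Section EnergyIncrement.
Variables (L M0 N0 e1 e2 e3 c12 c13 c23 dt A1 A2 : R) (N : nat) (a1 a2 b1 b2 p1 p2 : grid).
Hypotheses (HM0 : 0 < M0) (HN0 : 0 < N0) (Hc13 : 0 < c13) (Hc23 : 0 < c23)
  (Hchi : 4 * c13 * c23 - (c12 - c13 - c23) ^ 2 > 0) (Hh : L / INR N <> 0)
  (Gb : in_gibbs N b1 b2) (Gp : in_gibbs N p1 p2).

Local Notation h := (L / INR N).
Local Notation mu1' := (mu1 L N M0 N0 e1 e2 e3 c12 c13 c23 dt A1 a1 a2 b1 b2 p1 p2).
Local Notation mu2' := (mu2 L N M0 N0 e1 e2 e3 c12 c13 c23 dt A2 a1 a2 b1 b2 p1 p2).

(* Each summand below is shaped like a summand of [Gh], [l2_sq], [inner] or [dirichlet], so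
   that the summed inequality splits into exactly those sums. *)
Lemma energy_density_le i j :
  (S M0 N0 (p1 i j) (p2 i j) + Hf c12 c13 c23 (p1 i j) (p2 i j)) * gconst 1 i j
  - (S M0 N0 (b1 i j) (b2 i j) + Hf c12 c13 c23 (b1 i j) (b2 i j)) * gconst 1 i j
  + c13 * (gminus p1 b1 i j * gminus p1 b1 i j - gminus b1 a1 i j * gminus b1 a1 i j)
  + c23 * (gminus p2 b2 i j * gminus p2 b2 i j - gminus b2 a2 i j * gminus b2 a2 i j)
  + e1 ^ 2 * (Tk h p1 i j * gminus p1 b1 i j) + e2 ^ 2 * (Tk h p2 i j * gminus p2 b2 i j)
  + e3 ^ 2 * (Tk h (u3 p1 p2) i j * gminus (u3 p1 p2) (u3 b1 b2) i j)
  <= mu1' i j * gminus p1 b1 i j + mu2' i j * gminus p2 b2 i j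
     - A1 * dt * (- lap h (gminus p1 b1) i j * gminus p1 b1 i j)
     - A2 * dt * (- lap h (gminus p2 b2) i j * gminus p2 b2 i j)
     + 2 * c13 * (gminus p1 b1 i j * gminus p1 b1 i j)
     + 2 * c23 * (gminus p2 b2 i j * gminus p2 b2 i j)
     - (c12 - c13 - c23)
       * (gminus b1 a1 i j * gminus p2 b2 i j + gminus b2 a2 i j * gminus p1 b1 i j).
Proof.
  destruct Gb as [_ [_ Hb]], Gp as [_ [_ Hp]].
  destruct (Hb i j) as [Hb1 [Hb2 Hb12]], (Hp i j) as [Hp1 [Hp2 Hp12]].
  pose proof (S_sub_le M0 N0 _ _ _ _ HM0 HN0 Hp1 Hp2 Hp12 Hb1 Hb2 Hb12).
  pose proof (Hf_sub_le c12 c13 c23 (a1 i j) (a2 i j) (b1 i j) (b2 i j) (p1 i j) (p2 i j)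
                Hc13 Hc23 Hchi).
  unfold mu1, mu2, gminus, u3, gconst. nra.
Qed.

Lemma Gh_increment_le :
  Gh L N M0 N0 e1 e2 e3 c12 c13 c23 p1 p2 - Gh L N M0 N0 e1 e2 e3 c12 c13 c23 b1 b2
  + c13 * (l2_sq L N (gminus p1 b1) - l2_sq L N (gminus b1 a1))
  + c23 * (l2_sq L N (gminus p2 b2) - l2_sq L N (gminus b2 a2))
  <= inner h N mu1' (gminus p1 b1) + inner h N mu2' (gminus p2 b2)
     - A1 * dt * dirichlet h N (gminus p1 b1) (gminus p1 b1)
     - A2 * dt * dirichlet h N (gminus p2 b2) (gminus p2 b2)
     + 2 * c13 * inner h N (gminus p1 b1) (gminus p1 b1)
     + 2 * c23 * inner h N (gminus p2 b2) (gminus p2 b2)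
     - (c12 - c13 - c23)
       * (inner h N (gminus b1 a1) (gminus p2 b2) + inner h N (gminus b2 a2) (gminus p1 b1)).
Proof.
  destruct Gb as [Pb1 [Pb2 Hb]], Gp as [Pp1 [Pp2 Hp]].
  pose proof (sum2_le N _ _ energy_density_le) as W.
  repeat (rewrite sum2_plus in W || rewrite sum2_minus in W || rewrite sum2_scal in W).
  pose proof (dot_grad_dens_sub_le N h Hh p1 b1 Pp1 Pb1 ltac:(apply Hp) ltac:(apply Hb)) as G1.
  pose proof (dot_grad_dens_sub_le N h Hh p2 b2 Pp2 Pb2 ltac:(apply Hp) ltac:(apply Hb)) as G2.
  pose proof (dot_grad_dens_sub_le N h Hh (u3 p1 p2) (u3 b1 b2)
                (periodic_u3 N _ _ Pp1 Pp2) (periodic_u3 N _ _ Pb1 Pb2)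
                ltac:(intros i j; destruct (Hp i j); unfold u3; lra)
                ltac:(intros i j; destruct (Hb i j); unfold u3; lra)) as G3.
  unfold Gh, l2_sq, dirichlet. rewrite !inner_dot. unfold dot in *. cbv beta in *.
  assert (Hh2 : 0 <= h ^ 2) by apply pow2_ge_0.
  apply (Rmult_le_compat_l _ _ _ Hh2) in W.
  apply (Rmult_le_compat_l (h ^ 2 * e1 ^ 2)) in G1; [|apply Rmult_le_pos; auto using pow2_ge_0].
  apply (Rmult_le_compat_l (h ^ 2 * e2 ^ 2)) in G2; [|apply Rmult_le_pos; auto using pow2_ge_0].
  apply (Rmult_le_compat_l (h ^ 2 * e3 ^ 2)) in G3; [|apply Rmult_le_pos; auto using pow2_ge_0].
  nra.
Qed.

End EnergyIncrement.

Section NegativeNorm.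
Variables (N : nat) (h : R).
Hypothesis Hh : h <> 0.

Lemma inner_neg_lap_l x u g : (forall i j, - lap h x i j = u i j) ->
  inner h N u g = dirichlet h N x g.
Proof.
  intro Hx. unfold dirichlet. rewrite !inner_dot. unfold dot.
  f_equal. apply sum2_ext; intros; rewrite Hx; reflexivity.
Qed.

Lemma inner_young x y u t a : periodic N x -> periodic N y -> (forall i j, - lap h x i j = u i j) ->
  0 < t -> 2 * a * inner h N u y <= t * inner h N u x + a ^ 2 / t * dirichlet h N y y.
Proof. intros Px Py Hx Ht. rewrite !(inner_neg_lap_l x) by auto. apply dirichlet_young; auto. Qed.

(* Pairing the scheme with [psi = (-Delta_h)^{-1} d] and using Young's inequality for the
   cross term in the [(-1,h)] inner product. *)
Lemma bdf2_dissipation mu psi phi a b p dt : 0 < dt ->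
  periodic N mu -> periodic N psi -> periodic N phi ->
  (forall i j, - lap h psi i j = gminus p b i j) -> (forall i j, - lap h phi i j = gminus b a i j) ->
  (forall i j, (3 * p i j - 4 * b i j + a i j) / (2 * dt) = lap h mu i j) ->
  inner h N mu (gminus p b) + 3 / (4 * dt) * (inner h N (gminus p b) psi - inner h N (gminus b a) phi)
  <= - (inner h N (gminus p b) psi + inner h N (gminus b a) phi) / (2 * dt).
Proof.
  intros Hdt Pmu Ppsi Pphi Hpsi Hphi Hs.
  set (d := gminus p b) in *; set (dprev := gminus b a) in *.
  assert (Hpair : inner h N mu d = - (3 * inner h N d psi - inner h N dprev psi) / (2 * dt)).
  { rewrite inner_sym, (inner_neg_lap_l psi), dirichlet_sym by auto.
    unfold dirichlet. rewrite !inner_dot. unfold dot.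
    rewrite (sum2_ext N _ (fun i j => (- / (2 * dt)) * (3 * (d i j * psi i j) - dprev i j * psi i j))).
    2:{ intros i j. rewrite <- Hs. unfold d, dprev, gminus. field. lra. }
    rewrite sum2_scal, sum2_minus, sum2_scal. field. lra. }
  assert (Hcross := inner_young phi psi dprev (1 / 2) (1 / 2) Pphi Ppsi Hphi ltac:(lra)).
  rewrite <- (inner_neg_lap_l psi d psi Hpsi) in Hcross.
  assert (Hk : 0 < / (2 * dt)) by (apply Rinv_0_lt_compat; lra).
  apply (Rmult_le_compat_l _ _ _ (Rlt_le _ _ Hk)) in Hcross.
  replace (3 / (4 * dt)) with (3 / 2 * / (2 * dt)) by (field; lra).
  rewrite Hpair. unfold Rdiv in *. nra.
Qed.

(* The explicit treatment of the concave interaction energy costs cross terms, which the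
   stabilisation [A_i dt] and the [(-1,h)]-norm terms absorb. *)
Lemma concave_coupling_le c13 c23 c dt d1 d2 f1 f2 psi1 psi2 phi1 phi2 : 0 < dt ->
  periodic N d1 -> periodic N d2 -> periodic N psi1 -> periodic N psi2 ->
  periodic N phi1 -> periodic N phi2 ->
  (forall i j, - lap h psi1 i j = d1 i j) -> (forall i j, - lap h psi2 i j = d2 i j) ->
  (forall i j, - lap h phi1 i j = f1 i j) -> (forall i j, - lap h phi2 i j = f2 i j) ->
  2 * c13 * inner h N d1 d1 + 2 * c23 * inner h N d2 d2 - c * (inner h N f1 d2 + inner h N f2 d1)
  <= (inner h N d1 psi1 + inner h N d2 psi2 + inner h N f1 phi1 + inner h N f2 phi2) / (2 * dt)
     + (2 * c13 ^ 2 + 1 / 2 * c ^ 2) * dt * dirichlet h N d1 d1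
     + (2 * c23 ^ 2 + 1 / 2 * c ^ 2) * dt * dirichlet h N d2 d2.
Proof.
  intros Hdt Pd1 Pd2 Ppsi1 Ppsi2 Pphi1 Pphi2 Hpsi1 Hpsi2 Hphi1 Hphi2.
  assert (Ht : 0 < / (2 * dt)) by (apply Rinv_0_lt_compat; lra).
  pose proof (inner_young psi1 d1 d1 _ c13 Ppsi1 Pd1 Hpsi1 Ht).
  pose proof (inner_young psi2 d2 d2 _ c23 Ppsi2 Pd2 Hpsi2 Ht).
  pose proof (inner_young phi1 d2 f1 _ (- c / 2) Pphi1 Pd2 Hphi1 Ht).
  pose proof (inner_young phi2 d1 f2 _ (- c / 2) Pphi2 Pd1 Hphi2 Ht).
  replace (c13 ^ 2 / / (2 * dt)) with (2 * c13 ^ 2 * dt) in * by (field; lra).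
  replace (c23 ^ 2 / / (2 * dt)) with (2 * c23 ^ 2 * dt) in * by (field; lra).
  replace ((- c / 2) ^ 2 / / (2 * dt)) with (1 / 2 * c ^ 2 * dt) in * by (field; lra).
  unfold Rdiv. nra.
Qed.

End NegativeNorm.

Section ChemicalPotentials.
Variables (L M0 N0 e1 e2 e3 c12 c13 c23 dt A : R) (N : nat) (a1 a2 b1 b2 p1 p2 : grid).
Hypotheses (Pa1 : periodic N a1) (Pa2 : periodic N a2) (Pb1 : periodic N b1)
  (Pb2 : periodic N b2) (Pp1 : periodic N p1) (Pp2 : periodic N p2).

Lemma periodic_mu1 : periodic N (mu1 L N M0 N0 e1 e2 e3 c12 c13 c23 dt A a1 a2 b1 b2 p1 p2).
Proof.
  intros i j a b. unfold mu1.
  rewrite (periodic_Tk N _ p1 Pp1), (periodic_Tk N _ _ (periodic_u3 N _ _ Pp1 Pp2)),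
    (periodic_lap N _ _ (periodic_gminus N _ _ Pp1 Pb1)), Pa1, Pa2, Pb1, Pb2, Pp1, Pp2.
  reflexivity.
Qed.

Lemma periodic_mu2 : periodic N (mu2 L N M0 N0 e1 e2 e3 c12 c13 c23 dt A a1 a2 b1 b2 p1 p2).
Proof.
  intros i j a b. unfold mu2.
  rewrite (periodic_Tk N _ p2 Pp2), (periodic_Tk N _ _ (periodic_u3 N _ _ Pp1 Pp2)),
    (periodic_lap N _ _ (periodic_gminus N _ _ Pp2 Pb2)), Pa1, Pa2, Pb1, Pb2, Pp1, Pp2.
  reflexivity.
Qed.

End ChemicalPotentials.

Arguments periodic_mu1 {L M0 N0 e1 e2 e3 c12 c13 c23 dt A N a1 a2 b1 b2 p1 p2}.
Arguments periodic_mu2 {L M0 N0 e1 e2 e3 c12 c13 c23 dt A N a1 a2 b1 b2 p1 p2}.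

Theorem mainTheorem3
  (L : R) (N : nat) (M0 N0 e1 e2 e3 c12 c13 c23 dt : R)
  (a1 a2 b1 b2 p1 p2 : grid)
  (HL : 0 < L) (HN : (0 < N)%nat) (HM0 : 0 < M0) (HN0 : 0 < N0)
  (He1 : 0 < e1) (He2 : 0 < e2) (He3 : 0 < e3)
  (Hc12 : 0 < c12) (Hc13 : 0 < c13) (Hc23 : 0 < c23)
  (Hchi : 4 * c13 * c23 - (c12 - c13 - c23) ^ 2 > 0)
  (Hdt : 0 < dt)
  (Hg0 : in_gibbs N a1 a2) (Hg1 : in_gibbs N b1 b2) (Hg2 : in_gibbs N p1 p2)
  (Hm1a : mean L N a1 = mean L N b1) (Hm1b : mean L N b1 = mean L N p1)
  (Hm2a : mean L N a2 = mean L N b2) (Hm2b : mean L N b2 = mean L N p2)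
  (Hsol : solves_bdf2 L N M0 N0 e1 e2 e3 c12 c13 c23 1 1 dt
            (2 * c13 ^ 2 + 1 / 2 * (c12 - c13 - c23) ^ 2)
            (2 * c23 ^ 2 + 1 / 2 * (c12 - c13 - c23) ^ 2)
            a1 a2 b1 b2 p1 p2) :
  Fh L N M0 N0 e1 e2 e3 c12 c13 c23 dt b1 b2 p1 p2
  <= Fh L N M0 N0 e1 e2 e3 c12 c13 c23 dt a1 a2 b1 b2.
Proof.
  assert (Hh : L / INR N <> 0) by (apply Rgt_not_eq, Rdiv_lt_0_compat; [lra|apply lt_0_INR; lia]).
  set (A1 := 2 * c13 ^ 2 + 1 / 2 * (c12 - c13 - c23) ^ 2) in Hsol.
  set (A2 := 2 * c23 ^ 2 + 1 / 2 * (c12 - c13 - c23) ^ 2) in Hsol.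
  pose proof (Gh_increment_le L M0 N0 e1 e2 e3 c12 c13 c23 dt A1 A2 N a1 a2 b1 b2 p1 p2
                HM0 HN0 Hc13 Hc23 Hchi Hh Hg1 Hg2) as HG.
  destruct Hg0 as [Pa1 [Pa2 _]], Hg1 as [Pb1 [Pb2 _]], Hg2 as [Pp1 [Pp2 _]].
  destruct Hsol as [_ [Hs1 Hs2]]. setoid_rewrite Rmult_1_l in Hs1. setoid_rewrite Rmult_1_l in Hs2.
  destruct (inv_neg_lap_gminus L N p1 b1) as [Ppsi1 Hpsi1]; auto.
  destruct (inv_neg_lap_gminus L N p2 b2) as [Ppsi2 Hpsi2]; auto.
  destruct (inv_neg_lap_gminus L N b1 a1) as [Pphi1 Hphi1]; auto.
  destruct (inv_neg_lap_gminus L N b2 a2) as [Pphi2 Hphi2]; auto.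
  pose proof (bdf2_dissipation N _ Hh _ _ _ _ _ _ dt Hdt (periodic_mu1 Pa1 Pa2 Pb1 Pb2 Pp1 Pp2)
                Ppsi1 Pphi1 Hpsi1 Hphi1 Hs1) as D1.
  pose proof (bdf2_dissipation N _ Hh _ _ _ _ _ _ dt Hdt (periodic_mu2 Pa1 Pa2 Pb1 Pb2 Pp1 Pp2)
                Ppsi2 Pphi2 Hpsi2 Hphi2 Hs2) as D2.
  pose proof (concave_coupling_le N _ Hh c13 c23 (c12 - c13 - c23) dt _ _ _ _ _ _ _ _ Hdt
                (periodic_gminus N _ _ Pp1 Pb1) (periodic_gminus N _ _ Pp2 Pb2)
                Ppsi1 Ppsi2 Pphi1 Pphi2 Hpsi1 Hpsi2 Hphi1 Hphi2) as Habs.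
  unfold Fh, neg1_sq, A1, A2 in *. nra.
Qed.
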